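(* For all integers $n\ge 1$ and $q\ge 3$ there exists a quasi-complementary Hamming metric Gray code of $q$-ary $n$-tuples.
   Context: The Hamming distance between two words is the number of coordinates in which they differ. A quasi-complementary Hamming metric Gray code of $q$-ary $n$-tuples is an ordering $G(0),\ldots,G(q^n-1)$ of all words of $\mathbb{Z}_q^n$ such that consecutive words $G(i),G(i+1)$ ($0\le i<q^n-1$) have Hamming distance $1$ and $G((i+q^{n-1})\bmod q^n)=G(i)+(1,1,\ldots,1)$ for all $i$, with addition in $\mathbb{Z}_q^n$. *)

From mathcomp Require Import all_boot.
Set Implicit Arguments. Unset Strict Implicit. Unset Printing Implicit Defensive.

Definition word (q n : nat) := {ffun 'I_n -> 'I_q}.

Definition hamming (q n : nat) (x y : word q n) : nat := #|[set i | x i != y i]|.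

Lemma add_one_subproof (q : nat) (a : 'I_q) : (a.+1 %% q < q)%N.
Proof. by rewrite ltn_pmod // (leq_ltn_trans (leq0n a) (ltn_ord a)). Qed.

Definition add_one (q : nat) (a : 'I_q) : 'I_q := Ordinal (add_one_subproof a).

Definition add_ones (q n : nat) (x : word q n) : word q n :=
  [ffun i => add_one (x i)].

Definition quasi_compl_gray (q n : nat) (G : 'I_(q ^ n) -> word q n) : Prop :=
  bijective G /\
  (forall i j : 'I_(q ^ n), val j = (val i).+1 -> hamming (G i) (G j) = 1) /\
  (forall i j : 'I_(q ^ n), val j = (val i + q ^ n.-1) %% q ^ n ->
     G j = add_ones (G i)).

From mathcomp Require Import all_boot all_algebra zify.

Set Implicit Arguments.
Unset Strict Implicit.
Unset Printing Implicit Defensive.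

Import GRing.Theory.

(* Split Z_q^n as Z_q^m x Z_q.  If P is a Gray path through Z_q^m from 0 to
   (1,...,1), then G(a q^m + s) = (P(s) + a(1,...,1), a) is a quasi-complementary
   Gray code: within a block G follows P; P ends at (a+1)(1,...,1), where the
   next block starts, so crossing blocks changes the last coordinate only; and
   shifting the index by q^m adds (1,...,1).
   Gray paths from 0 to d(1,...,1), 0 < d < q, are built by induction on m:
   the last coordinate runs through Z_q from 0 to d, and block b is a translate
   of a path ending at e_b(1,...,1), with e_b = 2 for the first d blocks and
   e_b = 1 for the others, so that consecutive blocks join up and the
   translations add up to q + d, i.e. to d mod q.  The step e_b = 2 is why q >= 3 is needed. *)

Definition hdist (T : eqType) m (x y : nat -> T) : nat := \sum_(k < m) (x k != y k).

Definition blocks (T : Type) m N (w : nat -> T) (f : nat -> nat -> nat -> T) i k : T :=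
  if k < m then f (i %/ N) (i %% N) k else w (i %/ N).

Lemma block_decomp N q i :
  i < N * q -> exists b s, [/\ b < q, s < N & i = b * N + s].
Proof.
move=> hi; have hN : 0 < N by case: N hi.
exists (i %/ N), (i %% N); split; last exact: divn_eq.
- by rewrite ltn_divLR // mulnC.
- by rewrite ltn_pmod.
Qed.

Lemma blocksE (T : Type) m N w (f : nat -> nat -> nat -> T) b s k : s < N ->
  blocks m N w f (b * N + s) k = if k < m then f b s k else w b.
Proof.
move=> hs; have hN : 0 < N by case: N hs.
by rewrite /blocks divnMDl // divn_small // addn0 modnMDl modn_small.
Qed.

Section Codes.

Variable T : eqType.

(* A code f lists words f 0, f 1, ...; f i k is coordinate k of word i, and only
   the coordinates k < m and the words i < N matter. *)

Definition agree m (x y : nat -> T) := forall k, k < m -> x k = y k.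

Definition code_inj m N (f : nat -> nat -> T) :=
  forall i j, i < N -> j < N -> agree m (f i) (f j) -> i = j.

Definition code_gray m N (f : nat -> nat -> T) :=
  forall i, i.+1 < N -> hdist m (f i) (f i.+1) = 1.

Definition gray_path m N (f : nat -> nat -> T) (a z : T) :=
  [/\ code_inj m N f, code_gray m N f,
      agree m (f 0) (fun=> a) & agree m (f N.-1) (fun=> z)].

Lemma hdistS m (x y : nat -> T) : hdist m.+1 x y = hdist m x y + (x m != y m).
Proof. by rewrite /hdist big_ord_recr. Qed.

Lemma eq_hdist m (x x' y y' : nat -> T) :
  agree m x x' -> agree m y y' -> hdist m x y = hdist m x' y'.
Proof. by move=> hx hy; apply: eq_bigr => k _; rewrite hx ?hy. Qed.

Lemma hdist_agree m (x y : nat -> T) : agree m x y -> hdist m x y = 0.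
Proof. by move=> hxy; apply: big1 => k _; rewrite hxy ?eqxx. Qed.

Variables (m N q : nat) (w : nat -> T) (f : nat -> nat -> nat -> T).

Lemma hdist_blocks b b' s s' : s < N -> s' < N ->
  hdist m.+1 (blocks m N w f (b * N + s)) (blocks m N w f (b' * N + s')) =
  hdist m (f b s) (f b' s') + (w b != w b').
Proof.
move=> hs hs'; rewrite hdistS !blocksE // ltnn.
by congr (_ + _); apply: eq_hdist => k hk; rewrite blocksE // hk.
Qed.

Lemma blocks_inj :
  (forall b b', b < q -> b' < q -> w b = w b' -> b = b') ->
  (forall b, b < q -> code_inj m N (f b)) ->
  code_inj m.+1 (N * q) (blocks m N w f).
Proof.
move=> hw hf i j /block_decomp[b [s [hb hs ->]]] /block_decomp[b' [s' [hb' hs' ->]]].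
move=> hij; have ebb' : b = b'.
  by apply: hw => //; have := hij m (ltnSn m); rewrite !blocksE // ltnn.
subst b'; congr (_ + _); apply: (hf b) => // k hk.
by have := hij k (ltnW hk); rewrite !blocksE // hk => ->.
Qed.

Lemma blocks_gray :
  (forall b, b.+1 < q -> w b != w b.+1) ->
  (forall b, b < q -> code_gray m N (f b)) ->
  (forall b, b.+1 < q -> agree m (f b N.-1) (f b.+1 0)) ->
  code_gray m.+1 (N * q) (blocks m N w f).
Proof.
move=> hw hf hseam i hi; have [b [s [hb hs ei]]] := block_decomp (ltnW hi).
rewrite ei; case: (ltnP s.+1 N) => hs1.
- by rewrite -addnS hdist_blocks // eqxx addn0; apply: hf.
- have es : s = N.-1 by lia.
  have ei1 : (b * N + s).+1 = b.+1 * N + 0 by rewrite mulSn; lia.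
  have hb1 : b.+1 < q by move: hi; rewrite ei ei1; nia.
  by rewrite ei1 hdist_blocks ?es ?hdist_agree ?hw //; [exact: hseam | lia | lia].
Qed.

End Codes.

Section Translates.

Variable R : zmodType.

Lemma code_inj_translate m N (f : nat -> nat -> R) (c : R) :
  code_inj m N f -> code_inj m N (fun i k => f i k + c)%R.
Proof. by move=> hf i j hi hj hij; apply: hf => // k /hij /addIr. Qed.

Lemma code_gray_translate m N (f : nat -> nat -> R) (c : R) :
  code_gray m N f -> code_gray m N (fun i k => f i k + c)%R.
Proof.
move=> hf i /hf <-; apply: eq_bigr => k _.
by rewrite (inj_eq (addIr c)).
Qed.

Variables (m N q : nat) (w : nat -> R) (P : nat -> nat -> nat -> R) (e t : nat -> R).
Hypothesis w_inj : forall b b', b < q -> b' < q -> w b = w b' -> b = b'.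
Hypothesis P_path : forall b, b < q -> gray_path m N (P b) 0%R (e b).
Hypothesis t_step : forall b, b.+1 < q -> (t b + e b)%R = t b.+1.

Lemma translates_inj :
  code_inj m.+1 (N * q) (blocks m N w (fun b s k => P b s k + t b)%R).
Proof.
apply: blocks_inj => // b hb.
by have [Pinj _ _ _] := P_path hb; apply: code_inj_translate.
Qed.

Lemma translates_gray :
  code_gray m.+1 (N * q) (blocks m N w (fun b s k => P b s k + t b)%R).
Proof.
apply: blocks_gray => [b hb | b hb | b hb k hk].
- by apply/eqP => /(w_inj (ltnW hb) hb); lia.
- by have [_ Pgray _ _] := P_path hb; apply: code_gray_translate.
- have [_ _ _ Pend] := P_path (ltnW hb); have [_ _ Pstart _] := P_path hb.
  by rewrite Pend // Pstart // add0r addrC t_step.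
Qed.

End Translates.

(* block_offset d b is the sum of the block_step d c for c < b. *)
Definition letter_walk q d b := if b == q.-1 then d else if b < d then b else b.+1.
Definition block_step d b := if b < d then 2 else 1.
Definition block_offset d b := b + minn b d.

Lemma letter_walk_inj q d b b' : 0 < d < q -> b < q -> b' < q ->
  letter_walk q d b = letter_walk q d b' -> b = b'.
Proof. by rewrite /letter_walk => hd hb hb'; repeat case: ifP; lia. Qed.

Lemma letter_walk_lt q d b : 0 < d < q -> b < q -> letter_walk q d b < q.
Proof. by rewrite /letter_walk => hd hb; repeat case: ifP; lia. Qed.

Lemma letter_walk0 q d : 0 < d < q -> letter_walk q d 0 = 0.
Proof. by rewrite /letter_walk => hd; repeat case: ifP; lia. Qed.

Lemma letter_walk_last q d : letter_walk q d q.-1 = d.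
Proof. by rewrite /letter_walk eqxx. Qed.

Lemma block_offsetS d b : block_offset d b + block_step d b = block_offset d b.+1.
Proof. by rewrite /block_offset /block_step; case: ifP; lia. Qed.

Lemma block_offset_last q d :
  d < q -> block_offset d q.-1 + block_step d q.-1 = q + d.
Proof. by rewrite /block_offset /block_step; case: ifP; lia. Qed.

Lemma natr_mod (R : pzRingType) q n :
  (q%:R = 0 :> R)%R -> ((n %% q)%:R = n%:R :> R)%R.
Proof. by move=> hq; rewrite {2}(divn_eq n q) natrD natrM hq mulr0 add0r. Qed.

Lemma block_rotate N q b s : s < N -> b < q ->
  (b * N + s + N) %% (N * q) = b.+1 %% q * N + s.
Proof.
move=> hs hb; have hq : 0 < q by lia.
have hlt : b.+1 %% q < q by rewrite ltn_pmod.
rewrite addnAC -mulSnr [N * q]mulnC -modnDml -muln_modl modn_small //; nia.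
Qed.

Definition shifted_copies (R : pzRingType) m N (P : nat -> nat -> R) :=
  blocks m N (fun a => a%:R)%R (fun a s k => P s k + a%:R)%R.

Lemma shifted_copies_rotate (R : pzRingType) m N q (P : nat -> nat -> R) i k :
  (q%:R = 0 :> R)%R -> i < N * q ->
  shifted_copies m N P ((i + N) %% (N * q)) k = (shifted_copies m N P i k + 1)%R.
Proof.
move=> hq /block_decomp[a [s [ha hs ->]]].
rewrite /shifted_copies block_rotate // !blocksE // natr_mod // -natr1.
by case: ifP => _; rewrite ?addrA.
Qed.

Lemma natr_Zp_inj q a b :
  1 < q -> a < q -> b < q -> (a%:R = b%:R :> 'Z_q)%R -> a = b.
Proof.
by move=> hq ha hb /(congr1 (@nat_of_ord _)); rewrite !val_Zp_nat // !modn_small.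
Qed.

Lemma gray_path_Zp q m d : 2 < q -> 0 < d < q ->
  exists f : nat -> nat -> 'Z_q, gray_path m (q ^ m) f 0%R d%:R%R.
Proof.
move=> q_gt2; elim: m d => [|m IH] d hd.
  by exists (fun _ _ => 0%R); split=> [i j|i|//|//]; rewrite expn0; lia.
have [P1 path1] := IH 1 ltac:(lia); have [P2 path2] := IH 2 ltac:(lia).
pose P b := if b < d then P2 else P1.
have P_path b : b < q -> gray_path m (q ^ m) (P b) 0%R (block_step d b)%:R%R.
  by rewrite /P /block_step; case: ifP.
have w_inj b b' : b < q -> b' < q ->
    (letter_walk q d b)%:R%R = (letter_walk q d b')%:R%R :> 'Z_q -> b = b'.
  move=> hb hb'.
  move/(natr_Zp_inj (ltnW q_gt2) (letter_walk_lt hd hb) (letter_walk_lt hd hb')).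
  exact: letter_walk_inj.
have t_step b :
    ((block_offset d b)%:R + (block_step d b)%:R = (block_offset d b.+1)%:R :> 'Z_q)%R.
  by rewrite -natrD block_offsetS.
exists (blocks m (q ^ m) (fun b => (letter_walk q d b)%:R)
          (fun b s k => P b s k + (block_offset d b)%:R))%R.
have hN : 0 < q ^ m by rewrite expn_gt0; lia.
rewrite expnSr; split.
- exact: translates_inj w_inj P_path.
- exact: translates_gray w_inj P_path (fun b _ => t_step b).
- move=> k hk; rewrite -[0]/(0 * q ^ m + 0) blocksE //.
  have [_ _ Pstart _] := P_path 0 ltac:(lia).
  case: ifP => hkm; first by rewrite Pstart // /block_offset min0n addr0.
  by rewrite letter_walk0.
- move=> k hk; have -> : (q ^ m * q).-1 = q.-1 * q ^ m + (q ^ m).-1.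
    by move: hN; set N := q ^ m => hN; nia.
  rewrite blocksE; last lia.
  have [_ _ _ Pend] := P_path q.-1 ltac:(lia).
  case: ifP => hkm.
  + by rewrite Pend // addrC -natrD block_offset_last ?natrD ?pchar_Zp ?add0r //; lia.
  + by rewrite letter_walk_last.
Qed.

Lemma hamming_ffun q n (x y : nat -> 'I_q) :
  hamming [ffun k : 'I_n => x k] [ffun k : 'I_n => y k] = hdist n x y.
Proof.
rewrite /hamming /hdist -sum1_card big_mkcond /=.
by apply: eq_bigr => k _; rewrite inE !ffunE; case: (_ != _).
Qed.

Lemma code_inj_bij q n (f : nat -> nat -> 'I_q) : code_inj n (q ^ n) f ->
  bijective (fun i : 'I_(q ^ n) => [ffun k : 'I_n => f i k] : word q n).
Proof.
move=> f_inj; apply: inj_card_bij; last by rewrite card_ffun !card_ord.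
move=> i j /ffunP eq_ij; apply/val_inj/f_inj => [||k hk]; rewrite ?ltn_ord //.
by have := eq_ij (Ordinal hk); rewrite !ffunE.
Qed.

Lemma add_one_Zp p (x : 'Z_p.+2) : add_one x = (x + 1)%R.
Proof. by apply: val_inj => /=; rewrite modnDmr addn1. Qed.

Theorem corollary3 (n q : nat) (hn : 1 <= n) (hq : 3 <= q) :
  exists G : 'I_(q ^ n) -> word q n, quasi_compl_gray G.
Proof.
case: n hn => // m _; have [p eq_q] : exists p, q = p.+3 by exists (q - 3); lia.
(* For q = p.+3 the word alphabet 'I_q is 'Z_q by conversion. *)
subst q; set q := p.+3; have q_gt1 : 1 < q := isT.
have [P P_path] := gray_path_Zp m (d := 1) (isT : 2 < q) isT.
pose F := shifted_copies m (q ^ m) P.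
have F_inj : code_inj m.+1 (q ^ m.+1) F.
  rewrite expnSr; apply: translates_inj (fun _ _ => P_path) => a b.
  exact: natr_Zp_inj.
have F_gray : code_gray m.+1 (q ^ m.+1) F.
  rewrite expnSr; apply: translates_gray (fun _ _ => P_path) _ => [a b|a _].
    exact: natr_Zp_inj.
  by rewrite natr1.
exists (fun i => [ffun k : 'I_m.+1 => F i k]); split; [exact: code_inj_bij | split].
- move=> i j eq_j; rewrite hamming_ffun eq_j; apply: F_gray.
  by rewrite -eq_j ltn_ord.
- move=> [i hi] j ->; apply/ffunP => k; rewrite !ffunE add_one_Zp /=.
  rewrite expnSr in hi *; exact: shifted_copies_rotate (pchar_Zp q_gt1) hi.
Qed.
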